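(* Let $s(n)$ denote the number of unlabeled semimodular lattices with $n$ elements. Then $s(n) \ge \Omega(2.5080^n)$, i.e., there is a constant $b>0$ such that $s(n) \ge b \cdot 2.5080^n$ for all sufficiently large $n$.
   Context: All lattices are finite and nonempty, counted up to isomorphism. Semimodular means upper semimodular. *)

From mathcomp Require Import all_boot all_order all_algebra all_fingroup.
Set Implicit Arguments. Unset Strict Implicit. Unset Printing Implicit Defensive.

(* A binary relation on the n-element carrier 'I_n, encoded as a finite
   function so that the collection of all such relations is a finType. *)
Definition brel (n : nat) := {ffun 'I_n * 'I_n -> bool}.

Section Lat.
Variable n : nat.
Implicit Types (r : brel n) (x y z a b m j : 'I_n).

Definition le r x y : bool := r (x, y).

Definition is_poset r : bool :=
  [&& [forall x, le r x x],
      [forall x, forall y, le r x y && le r y x ==> (x == y)] &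
      [forall x, forall y, forall z, le r x y && le r y z ==> le r x z]].

Definition is_join r a b j : bool :=
  [&& le r a j, le r b j & [forall z, le r a z && le r b z ==> le r j z]].

Definition is_meet r a b m : bool :=
  [&& le r m a, le r m b & [forall z, le r z a && le r z b ==> le r z m]].

Definition is_lattice r : bool :=
  [&& is_poset r,
      [forall a, forall b, exists j, is_join r a b j] &
      [forall a, forall b, exists m, is_meet r a b m]].

Definition lt r x y : bool := (x != y) && le r x y.

Definition covers r x y : bool :=
  lt r x y && [forall z, ~~ (lt r x z && lt r z y)].

Definition semimodular r : bool :=
  [forall a, forall b, forall m, forall j,
     [&& is_meet r a b m, is_join r a b j & covers r m a] ==> covers r b j].

Definition iso r r' : bool :=
  [exists p : {perm 'I_n}, forall x, forall y, le r x y == le r' (p x) (p y)].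

Definition semimod_lattices : {set brel n} :=
  [set r | is_lattice r && semimodular r].

End Lat.

Definition s (n : nat) : nat :=
  #|[set [set r' in semimod_lattices n | iso r r'] | r in semimod_lattices n]|.

(* Fix a > 1 and G < D.  A map f giving every node of levels 1..G of a
   forest with levels 0..G of a nodes each a parent on the previous level
   determines a lattice L(f) with 1 + (G+1) a + D elements: a bottom, the
   forest ordered by ancestry, and on top a chain of D elements whose k-th
   element lies above exactly the nodes of level at most k.  Meets are
   common ancestors and incomparable pairs join in the chain, from which
   upper semimodularity follows.  Nodes are the elements whose down-set is
   a chain and their levels are read off covering chains from the bottom,
   so an isomorphism L(f0) ~ L(f1) is a level-wise relabelling of nodes.
   Hence each unlabelled lattice arises from at most (a!)^(G+1) of the
   a^(G a) maps f, and s(1 + (G+1) a + D) >= (a^a / a!)^G / a!.  For a = 47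
   this grows like c^n with c^48 <= 47^47 / 47!, and c = 2.508 qualifies. *)

From mathcomp Require Import all_boot all_order all_algebra all_fingroup zify.
Set Implicit Arguments. Unset Strict Implicit. Unset Printing Implicit Defensive.

(** * Lattices given by a relation on a finite type *)

Section RelationalLattice.
Variables (T : finType) (R : rel T).
Implicit Types x y z a b m j : T.

Definition is_lub a b j := [&& R a j, R b j & [forall z, R a z && R b z ==> R j z]].
Definition is_glb a b m := [&& R m a, R m b & [forall z, R z a && R z b ==> R z m]].
Definition strict x y := (x != y) && R x y.
Definition covby x y := strict x y && [forall z, ~~ (strict x z && strict z y)].

Definition posetb :=
  [&& [forall x, R x x],
      [forall x, forall y, R x y && R y x ==> (x == y)] &
      [forall x, forall y, forall z, R x y && R y z ==> R x z]].
Definition latticeb :=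
  [&& posetb, [forall a, forall b, exists j, is_lub a b j] &
      [forall a, forall b, exists m, is_glb a b m]].
Definition semimodularb :=
  [forall a, forall b, forall m, forall j,
     [&& is_glb a b m, is_lub a b j & covby m a] ==> covby b j].

Definition chain_below x := [forall y, forall z, R y x && R z x ==> R y z || R z y].

Lemma is_lubC a b j : is_lub a b j = is_lub b a j.
Proof. by rewrite /is_lub andbCA; congr [&& _, _ & _]; apply: eq_forallb => z; rewrite andbC. Qed.

Lemma is_glbC a b m : is_glb a b m = is_glb b a m.
Proof. by rewrite /is_glb andbCA; congr [&& _, _ & _]; apply: eq_forallb => z; rewrite andbC. Qed.

Lemma strictxx x : strict x x = false.
Proof. by rewrite /strict eqxx. Qed.

Lemma covbyxx x : covby x x = false.
Proof. by rewrite /covby strictxx. Qed.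

Section PartialOrder.
Hypotheses (R_refl : reflexive R) (R_anti : antisymmetric R) (R_trans : transitive R).

Lemma is_lub_le a b : R a b -> is_lub a b b.
Proof. by move=> ab; rewrite /is_lub ab R_refl; apply/forallP => z; apply/implyP => /andP[]. Qed.

Lemma is_glb_le a b : R a b -> is_glb a b a.
Proof. by move=> ab; rewrite /is_glb ab R_refl; apply/forallP => z; apply/implyP => /andP[]. Qed.

Lemma is_lub_uniq a b j j' : is_lub a b j -> is_lub a b j' -> j = j'.
Proof.
move=> /and3P[aj bj /forallP jl] /and3P[aj' bj' /forallP jl']; apply: R_anti.
by rewrite (implyP (jl j')) ?aj' // (implyP (jl' j)) ?aj.
Qed.

Lemma is_glb_uniq a b m m' : is_glb a b m -> is_glb a b m' -> m = m'.
Proof.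
move=> /and3P[ma mb /forallP mg] /and3P[ma' mb' /forallP mg']; apply: R_anti.
by rewrite (implyP (mg' m)) ?ma // (implyP (mg m')) ?ma'.
Qed.

Lemma posetbP : posetb.
Proof.
apply/and3P; split.
- by apply/forallP => x; apply: R_refl.
- by do 2 (apply/forallP => ?); apply/implyP => /R_anti ->.
- by do 3 (apply/forallP => ?); apply/implyP => /andP[]; apply: R_trans.
Qed.

Lemma latticebP :
  (forall a b, ~~ R a b -> ~~ R b a -> exists j, is_lub a b j) ->
  (forall a b, ~~ R a b -> ~~ R b a -> exists m, is_glb a b m) -> latticeb.
Proof.
move=> lub glb; apply/and3P; split; first exact: posetbP.
- apply/forallP => x; apply/forallP => y; apply/existsP.
  have [xy|nxy] := boolP (R x y); first by exists y; apply: is_lub_le.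
  have [yx|nyx] := boolP (R y x); first by exists x; rewrite is_lubC; apply: is_lub_le.
  exact: lub.
- apply/forallP => x; apply/forallP => y; apply/existsP.
  have [xy|nxy] := boolP (R x y); first by exists x; apply: is_glb_le.
  have [yx|nyx] := boolP (R y x); first by exists y; rewrite is_glbC; apply: is_glb_le.
  exact: glb.
Qed.

Lemma semimodularbP :
  (forall a b m j, ~~ R a b -> ~~ R b a -> is_glb a b m -> is_lub a b j ->
     covby m a -> covby b j) -> semimodularb.
Proof.
move=> incomp; apply/forallP => a; apply/forallP => b; apply/forallP => m.
apply/forallP => j; apply/implyP => /and3P[gm lj cm].
have [ab|nab] := boolP (R a b).
  by move: cm; rewrite (is_glb_uniq gm (is_glb_le ab)) covbyxx.
have [ba|nba] := boolP (R b a); last exact: incomp gm lj cm.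
rewrite is_glbC in gm; rewrite is_lubC in lj.
by rewrite (is_lub_uniq lj (is_lub_le ba)) -(is_glb_uniq gm (is_glb_le ba)).
Qed.

End PartialOrder.
End RelationalLattice.

Section OrderIsomorphism.
Variables (T T' : finType) (R : rel T) (R' : rel T') (h : T' -> T).
Hypotheses (h_bij : bijective h) (hR : forall x y, R' x y = R (h x) (h y)).

Lemma forall_bij (P : pred T) : [forall x, P (h x)] = [forall y, P y].
Proof.
case: h_bij => h' _ hK'; apply/forallP/forallP => [Ph y|Py x]; last exact: Py.
by rewrite -(hK' y); apply: Ph.
Qed.

Lemma exists_bij (P : pred T) : [exists x, P (h x)] = [exists y, P y].
Proof. by apply: negb_inj; rewrite !negb_exists -forall_bij. Qed.

Lemma is_lub_bij x y j : is_lub R' x y j = is_lub R (h x) (h y) (h j).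
Proof.
rewrite /is_lub !hR -forall_bij; congr [&& _, _ & _].
by apply: eq_forallb => z; rewrite !hR.
Qed.

Lemma is_glb_bij x y m : is_glb R' x y m = is_glb R (h x) (h y) (h m).
Proof.
rewrite /is_glb !hR -forall_bij; congr [&& _, _ & _].
by apply: eq_forallb => z; rewrite !hR.
Qed.

Lemma strict_bij x y : strict R' x y = strict R (h x) (h y).
Proof. by rewrite /strict hR (bij_eq h_bij). Qed.

Lemma covby_bij x y : covby R' x y = covby R (h x) (h y).
Proof.
rewrite /covby strict_bij -forall_bij; congr (_ && _).
by apply: eq_forallb => z; rewrite !strict_bij.
Qed.

Lemma chain_below_bij x : chain_below R' x = chain_below R (h x).
Proof.
rewrite /chain_below -forall_bij; apply: eq_forallb => y; rewrite -forall_bij.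
by apply: eq_forallb => z; rewrite !hR.
Qed.

Lemma posetb_bij : posetb R' = posetb R.
Proof.
rewrite /posetb -!forall_bij; congr [&& _, _ & _]; apply: eq_forallb => x.
- by rewrite hR.
- by rewrite -forall_bij; apply: eq_forallb => y; rewrite !hR (bij_eq h_bij).
- rewrite -forall_bij; apply: eq_forallb => y; rewrite -forall_bij; apply: eq_forallb => z.
  by rewrite !hR.
Qed.

Lemma latticeb_bij : latticeb R' = latticeb R.
Proof.
rewrite /latticeb posetb_bij -!forall_bij; congr [&& _, _ & _]; apply: eq_forallb => x;
  rewrite -forall_bij; apply: eq_forallb => y; rewrite -exists_bij; apply: eq_existsb => j.
- by rewrite is_lub_bij.
- by rewrite is_glb_bij.
Qed.

Lemma semimodularb_bij : semimodularb R' = semimodularb R.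
Proof.
rewrite /semimodularb -forall_bij; apply: eq_forallb => a.
rewrite -forall_bij; apply: eq_forallb => b; rewrite -forall_bij; apply: eq_forallb => m.
rewrite -forall_bij; apply: eq_forallb => j.
by rewrite is_glb_bij is_lub_bij !covby_bij.
Qed.

End OrderIsomorphism.

Lemma is_latticeE n (r : brel n) : is_lattice r = latticeb (le r).
Proof. by []. Qed.

Lemma semimodularE n (r : brel n) : semimodular r = semimodularb (le r).
Proof. by []. Qed.

(** * The lattice of a levelled forest capped by a chain *)

Notation Bot := (inl None).
Notation Node p := (inl (Some p)).
Notation Chain k := (inr k).

Section ForestLattice.
Variables (a G D : nat) (f : {ffun 'I_G * 'I_a -> 'I_a}).

(* [f (t, j)] is the parent, on level [t], of the node [j] of level [t.+1];
   off-range levels get the junk parent [j]. *)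
Definition parent (t : nat) (j : 'I_a) : 'I_a :=
  if insub t is Some t' then f (t', j) else j.

Fixpoint anc (k s : nat) (j : 'I_a) : 'I_a :=
  if k is k'.+1 then anc k' s.-1 (parent s.-1 j) else j.

Lemma ancD k1 k2 s j : anc (k1 + k2) s j = anc k1 (s - k2) (anc k2 s j).
Proof.
elim: k2 s j => [|k2 IH] s j /=; first by rewrite addn0 subn0.
by rewrite addnS /= IH; congr anc; lia.
Qed.

Definition node := ('I_G.+1 * 'I_a)%type.

Implicit Types (p q r : node) (k l : 'I_D).

Definition ancestor (q : node) (t : 'I_G.+1) : node := (t, anc (q.1 - t) q.1 q.2).

Lemma ancestor_id q : ancestor q q.1 = q.
Proof. by case: q => r i; rewrite /ancestor subnn. Qed.

Lemma ancestorA q (s t : 'I_G.+1) :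
  t <= s -> s <= q.1 -> ancestor (ancestor q s) t = ancestor q t.
Proof.
move=> ts sq; rewrite /ancestor /=; congr (_, _).
have -> : q.1 - t = (s - t) + (q.1 - s) by lia.
by rewrite ancD subKn.
Qed.

Definition node_le (p q : node) := (p.1 <= q.1) && (ancestor q p.1 == p).

Lemma node_leP p q : node_le p q -> p = ancestor q p.1.
Proof. by case/andP=> _ /eqP. Qed.

Lemma ancestor_le q (s t : 'I_G.+1) :
  t <= s -> s <= q.1 -> node_le (ancestor q t) (ancestor q s).
Proof. by move=> ts sq; rewrite /node_le /= ts (ancestorA ts sq) eqxx. Qed.

Lemma node_le_ancestor q (t : 'I_G.+1) : t <= q.1 -> node_le (ancestor q t) q.
Proof. by move=> tq; rewrite -{2}(ancestor_id q); apply: ancestor_le. Qed.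

Lemma node_le_ancestor_mid p q (t : 'I_G.+1) :
  node_le p q -> p.1 <= t -> t <= q.1 -> node_le p (ancestor q t).
Proof. by move=> /node_leP pq pt tq; rewrite pq; apply: ancestor_le. Qed.

Lemma node_le_parent (t : 'I_G) i j :
  node_le (widen_ord (leqnSn G) t, j) (lift ord0 t, i) = (f (t, i) == j).
Proof.
rewrite /node_le /ancestor /= /bump leq0n add1n leqnSn subSnn /=.
by rewrite /parent valK xpair_eqE eqxx.
Qed.

Lemma node_le_refl : reflexive node_le.
Proof. by move=> p; rewrite /node_le leqnn ancestor_id eqxx. Qed.

Lemma node_le_trans : transitive node_le.
Proof.
move=> q p r /[dup] /andP[pq _] /node_leP -> /[dup] /andP[qr _] /node_leP ->.
by rewrite (ancestorA pq qr) node_le_ancestor // (leq_trans pq qr).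
Qed.

Lemma node_le_level p q : node_le p q -> p.1 = q.1 :> nat -> p = q.
Proof. by move=> /node_leP pq /val_inj e; rewrite pq e ancestor_id. Qed.

Lemma node_le_anti : antisymmetric node_le.
Proof.
move=> p q /andP[/[dup] pq /andP[le_pq _] /andP[le_qp _]].
by apply: node_le_level pq _; apply/eqP; rewrite eqn_leq le_pq le_qp.
Qed.

Lemma node_le_total p q r : node_le p r -> node_le q r -> node_le p q || node_le q p.
Proof.
move=> /[dup] /andP[pr _] /node_leP -> /[dup] /andP[qr _] /node_leP ->.
case: (leqP p.1 q.1) => [pq|/ltnW qp]; apply/orP; [left|right]; exact: ancestor_le.
Qed.

Definition elt := (option node + 'I_D)%type.

Definition leL (x y : elt) : bool :=
  match x, y with
  | Bot, _ => true
  | Node p, Node q => node_le p q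
  | Node p, Chain k => p.1 <= k
  | Chain k, Chain l => k <= l
  | _, _ => false
  end.

Lemma leL_refl : reflexive leL.
Proof. by case=> [[p|]|k] //=; rewrite node_le_refl. Qed.

Lemma leL_anti : antisymmetric leL.
Proof.
case=> [[p|]|k] [[q|]|l] //=; rewrite ?andbF //.
- by move/node_le_anti ->.
- by move=> kl; congr inr; apply/val_inj/anti_leq.
Qed.

Lemma leL_trans : transitive leL.
Proof.
case=> [[q|]|l] [[p|]|k] [[r|]|m] //=; try exact: leq_trans.
- exact: node_le_trans.
- by case/andP=> pq _; apply: leq_trans.
Qed.

Lemma strict_Node p q : strict leL (Node p) (Node q) = node_le p q && (p.1 < q.1).
Proof.
rewrite /strict /= andbC; apply: andb_id2l => pq.
rewrite ltn_neqAle (proj1 (andP pq)) andbT.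
by congr negb; apply/eqP/eqP => [[->] | /(node_le_level pq) ->].
Qed.

Lemma strict_Chain k l : strict leL (Chain k) (Chain l) = (k < l).
Proof. by rewrite /strict /= ltn_neqAle. Qed.

Lemma covby_Bot_Node q : covby leL Bot (Node q) = (q.1 == 0 :> nat).
Proof.
apply/idP/idP => [/andP[_ /forallP no_mid] | /eqP q0].
- rewrite -leqn0 leqNgt; apply/negP => q_gt0.
  have := no_mid (Node (ancestor q ord0)).
  by rewrite strict_Node node_le_ancestor //= q_gt0.
- apply/andP; split=> //; apply/forallP => -[[r|]|k] //=.
  by rewrite strict_Node q0 ltn0 !andbF.
Qed.

Lemma covby_Node p q :
  covby leL (Node p) (Node q) = node_le p q && (q.1 == p.1.+1 :> nat).
Proof.
apply/idP/idP => [/andP[] | /andP[pq /eqP qp]].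
- rewrite strict_Node => /andP[pq pq_lt] /forallP no_mid; rewrite pq eqn_leq pq_lt andbT.
  rewrite leqNgt; apply/negP => p_lt.
  have lvl : p.1.+1 < G.+1 by have := ltn_ord q.1; lia.
  set t : 'I_G.+1 := inord p.1.+1; have tE : t = p.1.+1 :> nat by rewrite inordK.
  have := no_mid (Node (ancestor q t)); rewrite !strict_Node /= tE ltnSn p_lt.
  by rewrite node_le_ancestor_mid ?node_le_ancestor ?tE // ltnW.
- rewrite /covby strict_Node pq qp leqnn /=.
  apply/forallP => -[[r|]|k] /=; rewrite ?andbF // !strict_Node qp ltnS.
  by apply/negP => /andP[/andP[_ pr] /andP[_ rp]]; lia.
Qed.

Lemma covby_Node_Chain p k : p.1 = k :> nat -> covby leL (Node p) (Chain k).
Proof.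
move=> pk; apply/andP; split; first by rewrite /strict /= pk.
apply/forallP => -[[r|]|l]; rewrite ?strict_Node ?strict_Chain /strict /= ?andbF //.
- by apply/negP => /andP[/andP[_ pr] rk]; lia.
- lia.
Qed.

Lemma covby_Chain k l : l = k.+1 :> nat -> covby leL (Chain k) (Chain l).
Proof.
move=> lk; rewrite /covby strict_Chain lk leqnn /=.
by apply/forallP => -[[r|]|m]; rewrite ?strict_Chain /strict /= ?andbF //; lia.
Qed.

Lemma covby_Node_inv x p : covby leL x (Node p) ->
  x = Bot /\ p.1 = 0 :> nat \/
  exists2 r, x = Node r & node_le r p && (p.1 == r.1.+1 :> nat).
Proof.
case: x => [[r|]|k].
- by rewrite covby_Node => ?; right; exists r.
- by rewrite covby_Bot_Node => /eqP; left.
- by rewrite /covby /strict /=.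
Qed.

Lemma chain_below_Node p : chain_below leL (Node p).
Proof.
apply/forallP => -[[q|]|k]; apply/forallP => -[[r|]|l] //=;
  rewrite ?andbF ?orbT ?implybT //.
by apply/implyP => /andP[]; apply: node_le_total.
Qed.

Lemma chain_below_Chain k : 1 < a -> chain_below leL (Chain k) = false.
Proof.
move=> a_gt1; apply/negP => /forallP/(_ (Node (ord0, Ordinal (ltnW a_gt1)))).
by move=> /forallP/(_ (Node (ord0, Ordinal a_gt1))).
Qed.

Lemma glb_Node p q : exists m, is_glb leL (Node p) (Node q) m.
Proof.
pose common (t : 'I_G.+1) := [&& t <= p.1, t <= q.1 & ancestor p t == ancestor q t].
have common_below r : node_le r p -> node_le r q -> common r.1.
  move=> rp rq; rewrite /common -(node_leP rp) -(node_leP rq) eqxx andbT.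
  by case/andP: rp => -> _; case/andP: rq.
case: (pickP common) => [t0 common_t0 | no_common].
- case: (arg_maxnP val common_t0) => t /and3P[tp tq /eqP pqt] t_max.
  exists (Node (ancestor p t)).
  rewrite /is_glb /= node_le_ancestor // pqt node_le_ancestor //=.
  apply/forallP => -[[r|]|k] //=; apply/implyP => /andP[rp rq].
  by rewrite (node_leP rp) -pqt ancestor_le //; apply: t_max; apply: common_below.
- exists Bot; apply/and3P; split=> //; apply/forallP => -[[r|]|k] //=.
  by apply/implyP => /andP[rp rq]; have := no_common r.1; rewrite common_below.
Qed.

Lemma glb_Node_Chain p k :
  k < p.1 -> is_glb leL (Node p) (Chain k) (Node (ancestor p (inord k))).
Proof.
move=> kp; have kE : @inord G k = k :> nat by rewrite inordK //; have := ltn_ord p.1; lia.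
rewrite /is_glb /= node_le_ancestor ?kE ?(ltnW kp) ?leqnn //=.
apply/forallP => -[[r|]|l] //=; apply/implyP => /andP[rp rk].
by rewrite (node_leP rp) ancestor_le ?kE ?(ltnW kp).
Qed.

Hypothesis GD : G < D.

Lemma lub_Node p q : ~~ node_le p q -> ~~ node_le q p -> p.1 <= q.1 ->
  is_lub leL (Node p) (Node q) (Chain (widen_ord GD q.1)).
Proof.
move=> npq nqp pq; rewrite /is_lub /= pq leqnn /=.
apply/forallP => -[[r|]|l] //=; apply/implyP => /andP[pr qr] //.
by move: (node_le_total pr qr); rewrite (negbTE npq) (negbTE nqp).
Qed.

Lemma lub_Node_Chain p k : k <= p.1 ->
  is_lub leL (Node p) (Chain k) (Chain (widen_ord GD p.1)).
Proof.
move=> kp; rewrite /is_lub /= kp leqnn /=.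
by apply/forallP => -[[r|]|l] //=; apply/implyP => /andP[].
Qed.

Lemma latticeL : latticeb leL.
Proof.
apply: (latticebP leL_refl leL_anti leL_trans) => x y;
  case: x y => [[p|]|k] [[q|]|l] //= nxy nyx; try by exfalso; lia.
- have [pq|/ltnW qp] := leqP p.1 q.1.
    by exists (Chain (widen_ord GD q.1)); apply: lub_Node.
  by exists (Chain (widen_ord GD p.1)); rewrite is_lubC; apply: lub_Node.
- by exists (Chain (widen_ord GD p.1)); apply: lub_Node_Chain; lia.
- by exists (Chain (widen_ord GD q.1)); rewrite is_lubC; apply: lub_Node_Chain; lia.
- exact: glb_Node.
- by exists (Node (ancestor p (inord l))); apply: glb_Node_Chain; lia.
- by exists (Node (ancestor q (inord k))); rewrite is_glbC; apply: glb_Node_Chain; lia.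
Qed.

Lemma semimodularL : semimodularb leL.
Proof.
apply: (semimodularbP leL_refl leL_anti) => x y m j nxy nyx /and3P[_ my _] lub_j cov_m.
have lubE := is_lub_uniq leL_anti lub_j.
move: x y nxy nyx lub_j cov_m my lubE => [[p|]|k] [[q|]|l] //= npq nqp _ cov_m my lubE.
- suff pq : p.1 <= q.1 by rewrite (lubE _ (lub_Node npq nqp pq)); apply: covby_Node_Chain.
  case/covby_Node_inv: cov_m => [[_ ->] // | [r mr /andP[rp /eqP ->]]].
  move: my; rewrite mr /= => rq; rewrite ltn_neqAle (proj1 (andP rq)) andbT.
  by apply: contraNneq nqp => /(node_le_level rq) <-.
- rewrite -ltnNge in npq; rewrite (lubE _ (lub_Node_Chain (ltnW npq))); apply: covby_Chain.
  case/covby_Node_inv: cov_m => [[_ p0] | [r mr /andP[_ /eqP pr]]].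
    by rewrite p0 in npq.
  by move: my; rewrite mr /= => rl; apply/eqP; rewrite eqn_leq npq pr ltnS rl.
- rewrite -ltnNge in nqp; have := lub_Node_Chain (ltnW nqp); rewrite is_lubC => /lubE ->.
  exact: covby_Node_Chain.
- by exfalso; lia.
Qed.

End ForestLattice.

(** * Isomorphisms are level-wise relabellings *)

Definition relabel a G (sg : {ffun 'I_G.+1 -> {perm 'I_a}})
    (f : {ffun 'I_G * 'I_a -> 'I_a}) : {ffun 'I_G * 'I_a -> 'I_a} :=
  [ffun p => sg (widen_ord (leqnSn G) p.1) (f (p.1, (sg (lift ord0 p.1))^-1%g p.2))].

Section Rigidity.
Variables (a G D : nat) (f0 f1 : {ffun 'I_G * 'I_a -> 'I_a}) (q : elt a G D -> elt a G D).
Hypotheses (a_gt1 : 1 < a) (q_bij : bijective q).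
Hypothesis q_le : forall x y, leL f0 x y = leL f1 (q x) (q y).

Lemma q_Bot : q Bot = Bot.
Proof.
case: q_bij => q' _ q'K; apply: (leL_anti (f := f1)); rewrite /= andbT.
by rewrite -{2}(q'K Bot) -q_le.
Qed.

Lemma q_Node p : exists p', q (Node p) = Node p'.
Proof.
have := chain_below_Node D f0 p; rewrite (chain_below_bij q_bij q_le).
case E : (q (Node p)) => [[p'|]|k]; first by exists p'.
- by have := bij_inj q_bij (etrans E (esym q_Bot)).
- by rewrite chain_below_Chain.
Qed.

Lemma q_Node_level p : exists j, q (Node p) = Node (p.1, j).
Proof.
move pt : (p.1 : nat) => t; elim: t p pt => [|t IH] p pt; have [[r j] qp] := q_Node p.
all: exists j; rewrite qp; congr (Node (_, _)); apply: val_inj => /=.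
- move: (covby_Bot_Node D f0 p); rewrite pt eqxx (covby_bij q_bij q_le) q_Bot qp.
  by rewrite covby_Bot_Node => /eqP ->.
- have tG : t < G.+1 by have := ltn_ord p.1; lia.
  pose pp := ancestor f0 p (inord t).
  have ppt : pp.1 = t :> nat by rewrite /= inordK.
  have [j' qpp] := IH pp ppt.
  have := covby_Node D f0 pp p; rewrite node_le_ancestor ?ppt ?pt //= eqxx.
  rewrite (covby_bij q_bij q_le) qpp qp covby_Node /= => /andP[_ /eqP ->].
  by rewrite inordK.
Qed.

Definition relabel_at (r : 'I_G.+1) (i : 'I_a) : 'I_a :=
  if q (Node (r, i)) is Node p then p.2 else i.

Lemma relabel_atE r i : q (Node (r, i)) = Node (r, relabel_at r i).
Proof. by rewrite /relabel_at; have [j ->] := q_Node_level (r, i). Qed.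

Lemma relabel_at_inj r : injective (relabel_at r).
Proof.
by move=> i i' e; have := relabel_atE r i; rewrite e -relabel_atE => /(bij_inj q_bij) [].
Qed.

Lemma relabel_at_parent (t : 'I_G) i :
  f1 (t, relabel_at (lift ord0 t) i) = relabel_at (widen_ord (leqnSn G) t) (f0 (t, i)).
Proof.
have le0 : leL (D := D) f0
    (Node (widen_ord (leqnSn G) t, f0 (t, i))) (Node (lift ord0 t, i)).
  by rewrite /= node_le_parent.
by rewrite q_le !relabel_atE /= node_le_parent in le0; apply/eqP.
Qed.

Lemma relabel_of_iso : exists sg, f1 = relabel sg f0.
Proof.
exists [ffun r => perm (@relabel_at_inj r)]; apply/ffunP => -[t j]; rewrite !ffunE /=.
set sg_t := perm (@relabel_at_inj (lift ord0 t)); set i := (sg_t^-1)%g j.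
have -> : j = relabel_at (lift ord0 t) i by rewrite -[j](permKV sg_t) permE.
by rewrite relabel_at_parent permE.
Qed.

End Rigidity.

(** * Counting *)

Lemma iso_refl n (r : brel n) : iso r r.
Proof. by apply/existsP; exists 1%g; apply/forallP => x; apply/forallP => y; rewrite !perm1. Qed.

Section LabelledForestLattice.
Variables (a G D : nat).
Local Notation T := (elt a G D).

Definition lattice_rel (f : {ffun 'I_G * 'I_a -> 'I_a}) : brel #|{: T}| :=
  [ffun xy => leL f (enum_val xy.1) (enum_val xy.2)].

Lemma le_lattice_rel f x y : le (lattice_rel f) x y = leL f (enum_val x) (enum_val y).
Proof. by rewrite /le ffunE. Qed.

Lemma lattice_rel_semimod f : G < D -> lattice_rel f \in semimod_lattices #|{: T}|.
Proof.
move=> GD; rewrite inE is_latticeE semimodularE.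
rewrite (latticeb_bij (enum_val_bij T) (le_lattice_rel f)).
by rewrite (semimodularb_bij (enum_val_bij T) (le_lattice_rel f)) latticeL ?semimodularL.
Qed.

Lemma iso_lattice_rel f0 f1 :
  1 < a -> iso (lattice_rel f0) (lattice_rel f1) -> exists sg, f1 = relabel sg f0.
Proof.
move=> a_gt1 /existsP[p /forallP iso_p].
apply: (@relabel_of_iso _ _ _ _ _ (fun x => enum_val (p (enum_rank x)))) => //.
  apply: injF_bij => x y.
  by move=> /(bij_inj (enum_val_bij T))/perm_inj/(bij_inj (enum_rank_bij T)).
move=> x y; have /forallP/(_ (enum_rank y))/eqP := iso_p (enum_rank x).
by rewrite !le_lattice_rel !enum_rankK.
Qed.

End LabelledForestLattice.

Lemma leq_card_fibers (A B : finType) (phi : A -> B) (M : nat) :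
  (forall x, #|[set y | phi y == phi x]| <= M) -> #|A| <= M * #|[set phi x | x in A]|.
Proof.
move=> fiberM.
rewrite -[#|A|]sum1_card (partition_big phi (mem [set phi x | x in A])) /=; last first.
  by move=> x _; apply: imset_f.
rewrite mulnC -sum_nat_const; apply: leq_sum => _ /imsetP[x _ ->].
rewrite sum1_card (leq_trans _ (fiberM x)) // subset_leq_card //.
by apply/subsetP => y; rewrite !inE.
Qed.

Lemma card_forests_le (a G D : nat) : 1 < a -> G < D ->
  a ^ (G * a) <= a`! ^ G.+1 * s (1 + G.+1 * a + D).
Proof.
move=> a_gt1 GD.
have -> : 1 + G.+1 * a + D = #|{: elt a G D}|.
  by rewrite card_sum card_option card_prod !card_ord.
pose cls (f : {ffun 'I_G * 'I_a -> 'I_a}) :=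
  [set r' in semimod_lattices _ | iso (lattice_rel D f) r'].
have -> : a ^ (G * a) = #|{: {ffun 'I_G * 'I_a -> 'I_a}}|.
  by rewrite card_ffun card_prod !card_ord.
have -> : a`! ^ G.+1 = #|{: {ffun 'I_G.+1 -> {perm 'I_a}}}|.
  by rewrite card_ffun card_ord card_Sn.
apply: (leq_trans (leq_card_fibers (M := #|{: {ffun 'I_G.+1 -> {perm 'I_a}}}|) (phi := cls) _)).
  move=> f0; rewrite -[X in _ <= X]cardsT.
  apply: leq_trans _ (leq_imset_card (fun sg => relabel sg f0) _).
  apply/subset_leq_card/subsetP => f1; rewrite inE => /eqP cls_f1.
  have : lattice_rel D f1 \in cls f1 by rewrite inE lattice_rel_semimod ?iso_refl.
  rewrite cls_f1 inE => /andP[_ /(iso_lattice_rel a_gt1) [sg ->]].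
  by apply/imsetP; exists sg; rewrite ?inE.
rewrite leq_mul //; apply/subset_leq_card/subsetP => _ /imsetP[f _ ->].
by apply/imsetP; exists (lattice_rel D f); first exact: lattice_rel_semimod.
Qed.

Import Order.TTheory GRing.Theory Num.Theory.
Local Open Scope ring_scope.

Section ExponentialLowerBound.
Variable R : realFieldType.

Lemma s_geometric_lower_bound (a G D : nat) : (1 < a)%N -> (G < D)%N ->
  ((a ^ a)%:R / (a`!)%:R : R) ^+ G <= (a`!)%:R * (s (1 + G.+1 * a + D))%:R.
Proof.
move=> a_gt1 GD; rewrite expr_div_n ler_pdivrMr ?exprn_gt0 ?ltr0n ?fact_gt0 //.
rewrite mulrAC -exprS -!natrX -natrM ler_nat -expnM (mulnC a G).
exact: card_forests_le.
Qed.

Lemma ler_expr_ratio (p q m n k : nat) : (m * p ^ k <= n * q ^ k)%N -> (0 < q)%N ->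
  (p%:R / q%:R : R) ^+ k * m%:R <= n%:R.
Proof.
move=> pq q_gt0; rewrite expr_div_n mulrAC ler_pdivrMr ?exprn_gt0 ?ltr0n //.
by rewrite -!natrX -!natrM ler_nat mulnC.
Qed.

Lemma s_exp_lower_bound (a : nat) (c : R) : (1 < a)%N -> 1 <= c ->
  c ^+ a.+1 * (a`!)%:R <= (a ^ a)%:R ->
  exists b : R, 0 < b /\ exists N, forall n, (N <= n)%N -> b * c ^+ n <= (s n)%:R.
Proof.
move=> a_gt1 c_ge1 c_le; set rho : R := (a ^ a)%:R / (a`!)%:R.
have fact_gt0 : 0 < (a`!)%:R :> R by rewrite ltr0n fact_gt0.
have c_rho : c ^+ a.+1 <= rho by rewrite ler_pdivlMr.
have cX_ge0 : 0 <= c ^+ a.+1 by rewrite exprn_ge0 // (le_trans ler01).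
have rho_gt0 : 0 < rho by rewrite (lt_le_trans _ c_rho) // exprn_gt0 // (lt_le_trans ltr01).
have scale_gt0 : 0 < rho ^+ 2 * (a`!)%:R by rewrite mulr_gt0 // exprn_gt0.
exists (rho ^+ 2 * (a`!)%:R)^-1; split; first by rewrite invr_gt0.
(* Write [n = 1 + (G+1) a + D] with [G < D] and [n <= (a+1)(G+2)]. *)
exists a.+2 => n n_ge; set G := (n.-1 %/ a.+1).-1.
have G_gt0 : (0 < n.-1 %/ a.+1)%N by rewrite divn_gt0 //; lia.
have lb : (a.+1 * G.+1 <= n.-1)%N by rewrite /G prednK // mulnC leq_divM.
have ub : (n <= a.+1 * G.+2)%N.
  by rewrite /G prednK // mulnC -{1}(@prednK n) ?ltn_ceil //; lia.
have GD : (G < n.-1 - a * G.+1)%N by lia.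
have := s_geometric_lower_bound a_gt1 GD; rewrite (_ : 1 + _ + _ = n)%N; last by lia.
move=> rho_s; rewrite ler_pdivrMl //.
apply: le_trans (_ : c ^+ (a.+1 * G.+2) <= _); first by rewrite ler_weXn2l //; lia.
rewrite exprM; apply: le_trans (_ : rho ^+ G.+2 <= _).
  by apply: lerXn2r; rewrite ?nnegrE // ltW.
by rewrite -addn2 exprD mulrC -[X in _ <= X]mulrA ler_pM2l // exprn_gt0.
Qed.

End ExponentialLowerBound.

Lemma fact47_bound : (47`! * 2508 ^ 48 <= 47 ^ 47 * 1000 ^ 48)%N.
Proof. by rewrite !factS fact0; lia. Qed.

Theorem corollary2p5 :
  exists b : rat, 0 < b /\
    exists N : nat, forall n : nat, (N <= n)%N ->
      b * (2508%:R / 1000%:R) ^+ n <= (s n)%:R.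
Proof.
(* Rational literals are kept away from [done], which would evaluate them in unary. *)
apply: (@s_exp_lower_bound _ 47 _ isT).
  by rewrite ler_pdivlMr ?mul1r ?ler_nat; last rewrite ltr0n.
by have := ler_expr_ratio rat fact47_bound isT.
Qed.
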